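(* Let $q>0$, $\kappa>0$, $\sigma>0$, $\mu\in\mathbb{R}$, $\theta\in\mathbb{R}$, and let $\psi_X$, $\rho$, $\hat\rho$, $\zeta$, $\hat\zeta$, $d$ be as in the context. Consider the equation $$\psi_X(z)=q,\qquad z\in\mathbb{C}. \tag{$*$}$$ Then: (i) $( * )$ has no solutions, exactly one solution, or exactly two solutions. (ii) $z_0\in\mathbb{C}$ is a solution of $( * )$ if and only if $z_0\in[\hat\rho,0)\cup(0,\rho]$, $z_0\in\{\zeta,\hat\zeta\}$, $d>0$, and $q-1/\kappa\le \mu z_0$. In particular, whenever one of $\zeta,\hat\zeta$ is a solution of $( * )$, we have $\zeta\neq\hat\zeta$. (iii) If $\zeta$ is a solution of $( * )$ then $\zeta>0$; if $\hat\zeta$ is a solution of $( * )$ then $\hat\zeta<0$. Consequently, if both are solutions, then $\hat\rho\le\hat\zeta<0<\zeta\le\rho$. (iv) If $z_0$ solves $( * )$ and $\hat\rho<z_0<\rho$, then $z_0$ is a simple zero of the function $q-\psi_X(z)$ (which is analytic near $z_0$). (v) If $\zeta\in\mathbb{R}$ then $\hat\rho\le\zeta\le\rho$; if $\hat\zeta\in\mathbb{R}$ then $\hat\rho\le\hat\zeta\le\rho$. (vi) Neither $\rho=\hat\zeta$ nor $\hat\rho=\zeta$ is possible. (vii) One has both $\rho=\zeta$ and $\hat\rho=\hat\zeta$ if and only if $\mu=0$ and $q=1/\kappa$.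
   Context: Parameters: $q>0,\kappa>0,\sigma>0,\mu\in\mathbb{R},\theta\in\mathbb{R}$. The Laplace exponent of the Normal Inverse Gaussian (NIG) process with parameters $(\theta,\sigma,\kappa,\mu)$ is $$\psi_X(z)=\frac1\kappa-\frac1\kappa\sqrt{1-2\kappa\theta z-\kappa\sigma^2z^2}+\mu z,$$ where $\sqrt{\cdot}$ denotes the principal square root (values with nonnegative real part; for a negative real number $-y$ it equals $\iota\sqrt{y}$), $\iota=\sqrt{-1}$. Put $$\rho:=\frac{-\theta+\sqrt{\theta^2+\sigma^2/\kappa}}{\sigma^2},\qquad \hat\rho:=\frac{-\theta-\sqrt{\theta^2+\sigma^2/\kappa}}{\sigma^2},$$ so that $p(z):=1-2\kappa\theta z-\kappa\sigma^2z^2=(1-z/\rho)(1-z/\hat\rho)$ and $\hat\rho<0<\rho$. Further put $$d:=\theta^2+\mu^2-2\theta\mu(q\kappa-1)+q\sigma^2(2-q\kappa),$$ $$\zeta:=\frac{-\theta-\mu+\kappa\mu q+\sqrt d}{\kappa\mu^2+\sigma^2},\qquad \hat\zeta:=\frac{-\theta-\mu+\kappa\mu q-\sqrt d}{\kappa\mu^2+\sigma^2},$$ which are the two roots of the quadratic equation $p(z)=(1-q\kappa+\kappa\mu z)^2$ (possibly complex). *)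

From Stdlib Require Import Reals Lra.
Open Scope R_scope.

Record Cx : Type := mkC { Re : R ; Im : R }.

Definition RtoC (x : R) : Cx := mkC x 0.
Definition Cadd (z w : Cx) : Cx := mkC (Re z + Re w) (Im z + Im w).
Definition Copp (z : Cx) : Cx := mkC (- Re z) (- Im z).
Definition Csub (z w : Cx) : Cx := Cadd z (Copp w).
Definition Cmul (z w : Cx) : Cx :=
  mkC (Re z * Re w - Im z * Im w) (Re z * Im w + Im z * Re w).
Definition Cscale (a : R) (z : Cx) : Cx := mkC (a * Re z) (a * Im z).
Definition Cnorm (z : Cx) : R := sqrt (Re z ^ 2 + Im z ^ 2).

(** Principal square root: the root with nonnegative real part; on the
    negative real axis (real part of the root = 0) the root with
    nonnegative imaginary part, so that csqrt (-y) = i * sqrt y for y >= 0. *)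
Definition csqrt (z : Cx) : Cx :=
  mkC (sqrt ((Cnorm z + Re z) / 2))
      ((if Rle_dec 0 (Im z) then 1 else -1) * sqrt ((Cnorm z - Re z) / 2)).

Definition C_has_deriv (f : Cx -> Cx) (z0 l : Cx) : Prop :=
  forall eps : R, 0 < eps -> exists delta : R, 0 < delta /\
    forall h : Cx, Cnorm h < delta ->
      Cnorm (Csub (Csub (f (Cadd z0 h)) (f z0)) (Cmul l h)) <= eps * Cnorm h.

Definition C_analytic_near (f : Cx -> Cx) (z0 : Cx) : Prop :=
  exists r : R, 0 < r /\ forall z : Cx, Cnorm (Csub z z0) < r ->
    exists l : Cx, C_has_deriv f z l.

Definition simple_zero (f : Cx -> Cx) (z0 : Cx) : Prop :=
  f z0 = RtoC 0 /\ C_analytic_near f z0 /\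
  exists l : Cx, C_has_deriv f z0 l /\ l <> RtoC 0.

Section NIG.
Variables (q kappa sigma mu theta : R).

Definition pNIG (z : Cx) : Cx :=
  Csub (Csub (RtoC 1) (Cscale (2 * kappa * theta) z))
       (Cscale (kappa * sigma ^ 2) (Cmul z z)).

Definition psiX (z : Cx) : Cx :=
  Cadd (Csub (RtoC (1 / kappa)) (Cscale (1 / kappa) (csqrt (pNIG z))))
       (Cscale mu z).

Definition rho : R := (- theta + sqrt (theta ^ 2 + sigma ^ 2 / kappa)) / sigma ^ 2.
Definition rhohat : R := (- theta - sqrt (theta ^ 2 + sigma ^ 2 / kappa)) / sigma ^ 2.

Definition dNIG : R :=
  theta ^ 2 + mu ^ 2 - 2 * theta * mu * (q * kappa - 1) + q * sigma ^ 2 * (2 - q * kappa).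

Definition zeta : Cx :=
  Cscale (1 / (kappa * mu ^ 2 + sigma ^ 2))
         (Cadd (RtoC (- theta - mu + kappa * mu * q)) (csqrt (RtoC dNIG))).
Definition zetahat : Cx :=
  Cscale (1 / (kappa * mu ^ 2 + sigma ^ 2))
         (Csub (RtoC (- theta - mu + kappa * mu * q)) (csqrt (RtoC dNIG))).

Definition is_sol (z : Cx) : Prop := psiX z = RtoC q.

End NIG.

(** Write x, y for the real and imaginary parts of z, and put
  w(x) = 1 - q kappa + kappa mu x,  D = kappa mu^2 + sigma^2 > 0,
  B = theta + mu - kappa mu q,  A = - (sigma^2 (q kappa - 1) + kappa mu theta).
  If psi_X(z) = q then u = csqrt(p z) equals w(x) + i kappa mu y, and u^2 = p(z)
  becomes (D x + B)^2 - (D y)^2 = d and (D x + B) D y = 0 (identity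
  D (w^2 - p) = kappa ((D x + B)^2 - d)).  Since D w(x) = A + kappa mu (D x + B),
  the vertex D x + B = 0 with w(x) >= 0 forces A >= 0 and hence d > 0; so every
  solution is real, d > 0, and the solutions are exactly the real roots x of
  (D x + B)^2 = d, i.e. x in {zeta, zetahat}, with w(x) >= 0 (then p(x) = w(x)^2
  >= 0 puts x in [rhohat, rho]).  An inequality on A, B, d fixes the signs of
  zeta and zetahat (iii); the endpoint statements (vi), (vii) use that p vanishes
  at rho and rhohat.  For (iv), a general lemma differentiates csqrt o g when g
  has a quadratic Taylor bound and Re csqrt (g z0) > 0; for g = p the derivative
  of q - psi_X at a real root x0 has real part (- theta - sigma^2 x0) / w(x0) - mu,
  which vanishes only at the vertex, where d = 0. *)

From Stdlib Require Import Reals Lra Psatz.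
Open Scope R_scope.

Lemma Cx_ext z w : Re z = Re w -> Im z = Im w -> z = w.
Proof. destruct z, w; simpl; intros; subst; reflexivity. Qed.

Lemma Cx_ring : ring_theory (RtoC 0) (RtoC 1) Cadd Cmul Csub Copp (@eq Cx).
Proof.
  constructor; intros; apply Cx_ext; unfold Csub, Cadd, Cmul, Copp, RtoC; simpl; ring.
Qed.
Add Ring CxRing : Cx_ring.

Lemma Cscale_mul a z : Cscale a z = Cmul (RtoC a) z.
Proof. apply Cx_ext; unfold Cscale, Cmul, RtoC; simpl; ring. Qed.

Lemma Cnorm_ge0 z : 0 <= Cnorm z.
Proof. apply sqrt_pos. Qed.

Lemma Cnorm_sq z : Cnorm z * Cnorm z = Re z ^ 2 + Im z ^ 2.
Proof. unfold Cnorm. apply sqrt_sqrt. nra. Qed.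

Lemma Re_le_Cnorm z : Rabs (Re z) <= Cnorm z.
Proof.
  unfold Cnorm. rewrite <- sqrt_Rsqr_abs. apply sqrt_le_1_alt. unfold Rsqr. nra.
Qed.

Lemma Cnorm_mul z w : Cnorm (Cmul z w) = Cnorm z * Cnorm w.
Proof.
  unfold Cnorm, Cmul; simpl. rewrite <- sqrt_mult by nra. f_equal. ring.
Qed.

Lemma Cnorm_scale a z : Cnorm (Cscale a z) = Rabs a * Cnorm z.
Proof.
  unfold Cnorm, Cscale; simpl. rewrite <- (sqrt_Rsqr_abs a), <- sqrt_mult by (unfold Rsqr; nra).
  f_equal. unfold Rsqr. ring.
Qed.

Lemma Cnorm_RtoC a : Cnorm (RtoC a) = Rabs a.
Proof. unfold Cnorm, RtoC; simpl. rewrite <- sqrt_Rsqr_abs. f_equal. unfold Rsqr. ring. Qed.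

(* Triangle inequality, from Cauchy-Schwarz for the real inner product. *)
Lemma Cnorm_triangle z w : Cnorm (Cadd z w) <= Cnorm z + Cnorm w.
Proof.
  pose proof (Cnorm_sq z) as Hz. pose proof (Cnorm_sq w) as Hw.
  pose proof (Cnorm_ge0 z). pose proof (Cnorm_ge0 w).
  assert (HCS : Re z * Re w + Im z * Im w <= Cnorm z * Cnorm w).
  { pose proof (pow2_ge_0 (Re z * Im w - Im z * Re w)).
    assert (Hsq : (Re z * Re w + Im z * Im w) ^ 2 <= (Cnorm z * Cnorm w) ^ 2).
    { replace ((Cnorm z * Cnorm w) ^ 2) with ((Cnorm z * Cnorm z) * (Cnorm w * Cnorm w)) by ring.
      rewrite Hz, Hw. nra. }
    assert (0 <= Cnorm z * Cnorm w) by nra. nra. }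
  rewrite <- (sqrt_square (Cnorm z + Cnorm w)) by lra.
  apply sqrt_le_1_alt. unfold Cadd; simpl. nra.
Qed.

Lemma Cnorm_sub_le z w : Cnorm (Csub z w) <= Cnorm z + Cnorm w.
Proof.
  replace (Cnorm w) with (Cnorm (Copp w)) by (unfold Cnorm, Copp; simpl; f_equal; ring).
  apply Cnorm_triangle.
Qed.

Lemma csqrt_sq z : Cmul (csqrt z) (csqrt z) = z.
Proof.
  pose proof (Cnorm_sq z) as Hn. pose proof (Re_le_Cnorm z) as Ha.
  pose proof (Rle_abs (Re z)). pose proof (Rle_abs (- Re z)). rewrite Rabs_Ropp in *.
  set (a := sqrt ((Cnorm z + Re z) / 2)). set (b := sqrt ((Cnorm z - Re z) / 2)).
  assert (Ha2 : a * a = (Cnorm z + Re z) / 2) by (apply sqrt_sqrt; lra).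
  assert (Hb2 : b * b = (Cnorm z - Re z) / 2) by (apply sqrt_sqrt; lra).
  (* a b = |Im z| / 2, since (|z|^2 - Re z^2) / 4 = (Im z / 2)^2 *)
  assert (Hab : a * b = Rabs (Im z / 2)).
  { unfold a, b. rewrite <- sqrt_mult by lra. rewrite <- sqrt_Rsqr_abs. f_equal.
    unfold Rsqr. replace ((Cnorm z + Re z) / 2 * ((Cnorm z - Re z) / 2))
      with ((Cnorm z * Cnorm z - Re z ^ 2) / 4) by field.
    rewrite Hn. field. }
  unfold csqrt, Cmul; fold a b; apply Cx_ext; simpl; destruct (Rle_dec 0 (Im z)).
  - nra.
  - nra.
  - rewrite Rabs_right in Hab by lra. lra.
  - rewrite Rabs_left in Hab by lra. lra.
Qed.

Lemma csqrt_Re_ge0 z : 0 <= Re (csqrt z).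
Proof. apply sqrt_pos. Qed.

Lemma csqrt_Re_pos z : 0 < Re z -> 0 < Re (csqrt z).
Proof.
  intros H. apply sqrt_lt_R0. pose proof (Re_le_Cnorm z). pose proof (Rle_abs (Re z)). lra.
Qed.

Lemma csqrt_nonneg a : 0 <= a -> csqrt (RtoC a) = RtoC (sqrt a).
Proof.
  intros H. unfold csqrt. rewrite Cnorm_RtoC, Rabs_right by lra.
  apply Cx_ext; simpl.
  - f_equal. lra.
  - replace ((a - a) / 2) with 0 by lra. rewrite sqrt_0. ring.
Qed.

Lemma csqrt_real_Im0 a : Im (csqrt (RtoC a)) = 0 -> 0 <= a.
Proof.
  intros H. destruct (Rle_dec 0 a) as [Ha|Ha]; [exact Ha|exfalso].
  unfold csqrt in H. rewrite Cnorm_RtoC, Rabs_left in H by lra. simpl in H.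
  destruct (Rle_dec 0 0) as [_|]; [|lra].
  assert (0 < sqrt ((- a - a) / 2)) by (apply sqrt_lt_R0; lra). lra.
Qed.

Definition Cinv (w : Cx) : Cx :=
  mkC (Re w / (Re w ^ 2 + Im w ^ 2)) (- Im w / (Re w ^ 2 + Im w ^ 2)).

Lemma Cinv_r w : 0 < Re w -> Cmul w (Cinv w) = RtoC 1.
Proof.
  intros H. assert (0 < Re w ^ 2 + Im w ^ 2) by nra.
  unfold Cinv, Cmul, RtoC; apply Cx_ext; simpl; field; lra.
Qed.

Definition quad_bound (g : Cx -> Cx) (z0 P : Cx) (c : R) : Prop :=
  forall h : Cx,
    Cnorm (Csub (Csub (g (Cadd z0 h)) (g z0)) (Cmul P h)) <= c * (Cnorm h * Cnorm h).

Lemma quad_bound_increment g z0 P c h : 0 <= c -> quad_bound g z0 P c -> Cnorm h <= 1 ->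
  Cnorm (Csub (g (Cadd z0 h)) (g z0)) <= Cnorm h * (Cnorm P + c).
Proof.
  intros hc Hg Hh. pose proof (Cnorm_ge0 h). specialize (Hg h).
  replace (Csub (g (Cadd z0 h)) (g z0))
    with (Cadd (Csub (Csub (g (Cadd z0 h)) (g z0)) (Cmul P h)) (Cmul P h)) by ring.
  assert (c * (Cnorm h * Cnorm h) <= c * Cnorm h) by (apply Rmult_le_compat_l; nra).
  eapply Rle_trans; [apply Cnorm_triangle|]. rewrite Cnorm_mul. lra.
Qed.

(* Dividing
   csqrt(g(z0+h))^2 - csqrt(g z0)^2 = g(z0+h) - g(z0) by the sum of the roots,
   whose norm is at least Re csqrt (g z0), bounds the error by M |h|^2. *)
Lemma csqrt_comp_deriv g z0 P c : 0 <= c -> quad_bound g z0 P c ->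
  0 < Re (csqrt (g z0)) ->
  C_has_deriv (fun z => csqrt (g z)) z0
    (Cmul P (Cinv (Cadd (csqrt (g z0)) (csqrt (g z0))))).
Proof.
  intros hc Hg Ha eps heps. cbv beta.
  set (u0 := csqrt (g z0)) in *. set (L := Cmul P (Cinv (Cadd u0 u0))).
  assert (HL : Cmul (Cadd u0 u0) L = P).
  { unfold L. transitivity (Cmul P (Cmul (Cadd u0 u0) (Cinv (Cadd u0 u0)))); [ring|].
    rewrite Cinv_r by (change (0 < Re u0 + Re u0); lra). ring. }
  set (a := Re u0) in *.
  pose proof (Cnorm_ge0 P) as hNP. pose proof (Cnorm_ge0 L) as hNL.
  set (M := a * c + Cnorm L * (Cnorm P + c)).
  assert (hM : 0 <= M) by (unfold M; apply Rplus_le_le_0_compat; apply Rmult_le_pos; lra).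
  exists (Rmin 1 (eps * (a * a) / (M + 1))). split.
  { apply Rmin_glb_lt; [lra|]. apply Rdiv_lt_0_compat; [apply Rmult_lt_0_compat; nra|lra]. }
  intros h Hh. pose proof (Cnorm_ge0 h) as hh.
  assert (Hh1 : Cnorm h <= 1) by (pose proof (Rmin_l 1 (eps * (a * a) / (M + 1))); lra).
  assert (HhM : Cnorm h * M <= eps * (a * a)).
  { assert (Hd : Cnorm h <= eps * (a * a) / (M + 1))
      by (pose proof (Rmin_r 1 (eps * (a * a) / (M + 1))); lra).
    apply (Rmult_le_compat_r (M + 1)) in Hd; [|lra].
    unfold Rdiv in Hd. rewrite Rmult_assoc, Rinv_l, Rmult_1_r in Hd by lra. nra. }
  set (u1 := csqrt (g (Cadd z0 h))).
  set (E := Csub (Csub u1 u0) (Cmul L h)).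
  set (Rm := Csub (Csub (g (Cadd z0 h)) (g z0)) (Cmul P h)).
  (* u1^2 - u0^2 = g(z0+h) - g(z0), then divide the error by u1 + u0 *)
  assert (Hsq : Cmul (Cadd u1 u0) (Csub u1 u0) = Csub (g (Cadd z0 h)) (g z0)).
  { transitivity (Csub (Cmul u1 u1) (Cmul u0 u0)); [ring|].
    unfold u1, u0. rewrite !csqrt_sq. reflexivity. }
  assert (HE : Cmul (Cadd u1 u0) E = Csub Rm (Cmul (Cmul L h) (Csub u1 u0))).
  { transitivity (Csub (Cmul (Cadd u1 u0) (Csub u1 u0))
                       (Cadd (Cmul (Cmul (Cadd u0 u0) L) h) (Cmul (Cmul L h) (Csub u1 u0)))).
    { unfold E. ring. }
    rewrite Hsq, HL. unfold Rm. ring. }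
  (* |u1 + u0| >= Re (u1 + u0) >= a, since Re u1 >= 0 *)
  assert (Hsum : a <= Cnorm (Cadd u1 u0)).
  { pose proof (Re_le_Cnorm (Cadd u1 u0)) as H1. change (Re (Cadd u1 u0)) with (Re u1 + a) in H1.
    pose proof (Rle_abs (Re u1 + a)). pose proof (csqrt_Re_ge0 (g (Cadd z0 h)) : 0 <= Re u1).
    lra. }
  assert (Hdiff : a * Cnorm (Csub u1 u0) <= Cnorm h * (Cnorm P + c)).
  { apply Rle_trans with (Cnorm (Cadd u1 u0) * Cnorm (Csub u1 u0)).
    { apply Rmult_le_compat_r; [apply Cnorm_ge0|exact Hsum]. }
    rewrite <- Cnorm_mul, Hsq. apply quad_bound_increment; assumption. }
  assert (HEa : a * Cnorm E <= c * (Cnorm h * Cnorm h) + Cnorm L * Cnorm h * Cnorm (Csub u1 u0)).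
  { apply Rle_trans with (Cnorm (Cadd u1 u0) * Cnorm E).
    { apply Rmult_le_compat_r; [apply Cnorm_ge0|exact Hsum]. }
    rewrite <- Cnorm_mul, HE. eapply Rle_trans; [apply Cnorm_sub_le|].
    rewrite !Cnorm_mul. specialize (Hg h). fold Rm in Hg. lra. }
  assert (HEa2 : a * a * Cnorm E <= M * (Cnorm h * Cnorm h)).
  { assert (a * (a * Cnorm E) <= a * (c * (Cnorm h * Cnorm h)
                                   + Cnorm L * Cnorm h * Cnorm (Csub u1 u0)))
      by (apply Rmult_le_compat_l; lra).
    assert (Cnorm L * Cnorm h * (a * Cnorm (Csub u1 u0))
            <= Cnorm L * Cnorm h * (Cnorm h * (Cnorm P + c)))
      by (apply Rmult_le_compat_l; [nra|exact Hdiff]).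
    unfold M. nra. }
  assert (Cnorm h * M * Cnorm h <= eps * (a * a) * Cnorm h)
    by (apply Rmult_le_compat_r; lra).
  apply (Rmult_le_reg_l (a * a)); [nra|]. nra.
Qed.

Lemma has_deriv_affine u z0 L (c : Cx) (b a : R) : C_has_deriv u z0 L ->
  C_has_deriv (fun z => Cadd c (Cadd (Cscale b (u z)) (Cscale a z))) z0
    (Cadd (Cscale b L) (RtoC a)).
Proof.
  intros Hu eps heps. pose proof (Rabs_pos b).
  destruct (Hu (eps / (Rabs b + 1))) as [delta [hd Hd]].
  { apply Rdiv_lt_0_compat; lra. }
  exists delta. split; [exact hd|]. intros h Hh. cbv beta.
  match goal with |- Cnorm ?e <= _ =>
    replace e with (Cscale b (Csub (Csub (u (Cadd z0 h)) (u z0)) (Cmul L h)))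
      by (rewrite !Cscale_mul; ring) end.
  rewrite Cnorm_scale. specialize (Hd h Hh). pose proof (Cnorm_ge0 h).
  apply Rle_trans with (Rabs b * (eps / (Rabs b + 1) * Cnorm h)).
  - apply Rmult_le_compat_l; lra.
  - replace (Rabs b * (eps / (Rabs b + 1) * Cnorm h))
      with (eps * Cnorm h * (Rabs b / (Rabs b + 1))) by (field; lra).
    assert (Rabs b / (Rabs b + 1) <= 1)
      by (apply Rmult_le_reg_r with (Rabs b + 1); [lra|]; unfold Rdiv;
          rewrite Rmult_assoc, Rinv_l; lra).
    assert (0 <= eps * Cnorm h) by nra.
    assert (0 <= Rabs b / (Rabs b + 1))
      by (apply Rmult_le_pos; [lra|left; apply Rinv_0_lt_compat; lra]).
    nra.
Qed.

Lemma has_deriv_ext f g z0 l : (forall z, f z = g z) ->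
  C_has_deriv f z0 l -> C_has_deriv g z0 l.
Proof.
  intros E Hf eps heps. destruct (Hf eps heps) as [delta [hd Hd]].
  exists delta. split; [exact hd|]. intros h Hh. rewrite <- !E. auto.
Qed.

Lemma simple_zero_ext f g z0 : (forall z, f z = g z) ->
  simple_zero f z0 -> simple_zero g z0.
Proof.
  intros E (H0 & (r & hr & Hr) & l & Hl & Hl0). split; [|split].
  - rewrite <- E. exact H0.
  - exists r. split; [exact hr|]. intros z Hz. destruct (Hr z Hz) as [l' Hl'].
    exists l'. exact (has_deriv_ext f g z l' E Hl').
  - exists l. split; [exact (has_deriv_ext f g z0 l E Hl)|exact Hl0].
Qed.

(* If g has quadratic bounds everywhere and Re g z0 > 0, then csqrt o g is
   holomorphic near z0: g stays in the right half-plane on a small disc. *)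
Lemma csqrt_comp_analytic g z0 :
  (forall z, exists P c, 0 <= c /\ quad_bound g z P c) -> 0 < Re (g z0) ->
  C_analytic_near (fun z => csqrt (g z)) z0.
Proof.
  intros Hg Hpos. destruct (Hg z0) as (P & c & hc & Hq).
  pose proof (Cnorm_ge0 P).
  exists (Rmin 1 (Re (g z0) / (Cnorm P + c + 1))). split.
  { apply Rmin_glb_lt; [lra|]. apply Rdiv_lt_0_compat; lra. }
  intros z Hz. set (h := Csub z z0) in *.
  assert (Hh1 : Cnorm h <= 1) by (pose proof (Rmin_l 1 (Re (g z0) / (Cnorm P + c + 1))); lra).
  assert (Hh2 : Cnorm h * (Cnorm P + c + 1) < Re (g z0)).
  { assert (Hd : Cnorm h < Re (g z0) / (Cnorm P + c + 1))
      by (pose proof (Rmin_r 1 (Re (g z0) / (Cnorm P + c + 1))); lra).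
    apply (Rmult_lt_compat_r (Cnorm P + c + 1)) in Hd; [|lra].
    unfold Rdiv in Hd. rewrite Rmult_assoc, Rinv_l, Rmult_1_r in Hd by lra. exact Hd. }
  assert (Hgz : 0 < Re (g z)).
  { pose proof (quad_bound_increment g z0 P c h hc Hq Hh1) as Hinc.
    replace (Cadd z0 h) with z in Hinc by (unfold h; ring).
    pose proof (Re_le_Cnorm (Csub (g z) (g z0))) as Hre.
    change (Re (Csub (g z) (g z0))) with (Re (g z) + - Re (g z0)) in Hre.
    pose proof (Rle_abs (- (Re (g z) + - Re (g z0)))) as Hab. rewrite Rabs_Ropp in Hab.
    pose proof (Cnorm_ge0 h). nra. }
  destruct (Hg z) as (Pz & cz & hcz & Hqz).
  eexists. apply csqrt_comp_deriv with cz; [exact hcz|exact Hqz|].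
  apply csqrt_Re_pos. exact Hgz.
Qed.

Lemma analytic_affine u z0 (c : Cx) (b a : R) : C_analytic_near u z0 ->
  C_analytic_near (fun z => Cadd c (Cadd (Cscale b (u z)) (Cscale a z))) z0.
Proof.
  intros (r & hr & Hr). exists r. split; [exact hr|]. intros z Hz.
  destruct (Hr z Hz) as [l Hl]. eexists. exact (has_deriv_affine u z l c b a Hl).
Qed.

(* Assuming B >= r forces q kappa - 1 = e >= 1, and then each sign of mu
   contradicts A + kappa mu r >= 0 (for mu < 0 via k|mu|(B -+ r) >= e D). *)
Lemma key_sign q k s m t r : 0 < q -> 0 < k -> 0 < s -> 0 <= r ->
  r ^ 2 = dNIG q k s m t -> 0 <= - (s ^ 2 * (q * k - 1) + k * m * t) + k * m * r ->
  t + m - k * m * q < r.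
Proof.
  intros hq hk hs hr Hd HA.
  destruct (Rlt_le_dec (t + m - k * m * q) r) as [H|H]; [exact H|exfalso].
  set (e := q * k - 1) in *. set (B := t + m - k * m * q) in *.
  set (D := k * m ^ 2 + s ^ 2). assert (HD : 0 < D) by (unfold D; nra).
  assert (HB : B = t - m * e) by (unfold B, e; ring).
  assert (Hbr : k * (B ^ 2 - r ^ 2) = D * (e ^ 2 - 1)) by (rewrite Hd; unfold dNIG, B, D, e; ring).
  (* B >= r >= 0 gives e^2 >= 1, and e = q k - 1 > -1, so e >= 1 *)
  assert (he : 1 <= e).
  { assert (0 <= k * (B ^ 2 - r ^ 2)) by (apply Rmult_le_pos; nra).
    assert (0 <= D * (e ^ 2 - 1)) by lra.
    assert (0 <= e ^ 2 - 1) by nra.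
    assert (0 < e + 1) by (unfold e; nra). nra. }
  assert (hse : 0 < s ^ 2 * e) by nra.
  destruct (Rtotal_order m 0) as [Hm|[Hm|Hm]].
  - (* m < 0: both k|m|(B - r) and k|m|(B + r) exceed e D, too much for B^2 - r^2 *)
    set (n := - m) in *. assert (Hmn : m = - n) by (unfold n; ring).
    clearbody n. subst m. assert (hn : 0 < n) by lra.
    assert (Hk1 : e * D <= k * n * (B - r)) by (rewrite HB; unfold D; nra).
    assert (0 <= k * n * r) by (apply Rmult_le_pos; nra).
    assert (Hk2 : e * D <= k * n * (B + r)) by lra.
    assert (Hk3 : e ^ 2 * D ^ 2 <= (k * n) ^ 2 * (B ^ 2 - r ^ 2)).
    { replace ((k * n) ^ 2 * (B ^ 2 - r ^ 2))
        with ((k * n * (B - r)) * (k * n * (B + r))) by ring.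
      assert (0 <= e * D) by nra. nra. }
    assert (E : (k * n) ^ 2 * (B ^ 2 - r ^ 2) = k * n ^ 2 * (D * (e ^ 2 - 1)))
      by (rewrite <- Hbr; ring).
    rewrite E in Hk3.
    assert (Hk4 : e ^ 2 * D <= k * n ^ 2 * (e ^ 2 - 1))
      by (apply (Rmult_le_reg_l D); [exact HD|nra]).
    unfold D in Hk4. nra.
  - (* m = 0: then A = - s^2 e < 0 *)
    subst m. nra.
  - (* m > 0: k m (r - t) >= s^2 e > 0, yet r - t <= - m e < 0 *)
    assert (r - t <= - m * e) by (rewrite HB in H; lra).
    assert (k * m * (r - t) <= k * m * (- m * e)) by (apply Rmult_le_compat_l; nra).
    assert (0 <= k * m * m * e) by (apply Rmult_le_pos; nra).
    nra.
Qed.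

Section NIGRoots.
Variables q k s m t : R.
Hypotheses (hq : 0 < q) (hk : 0 < k) (hs : 0 < s).

Local Notation d := (dNIG q k s m t).

(* Re csqrt (p z) at a solution z = x: the linear function w(x). *)
Definition wlin (x : R) : R := 1 - q * k + k * m * x.
Definition preal (x : R) : R := 1 - 2 * k * t * x - k * s ^ 2 * x ^ 2.
(* The coefficients D, B, A of the quadratic (D x + B)^2 = d and of D w. *)
Definition Dco : R := k * m ^ 2 + s ^ 2.
Definition Bco : R := t + m - k * m * q.
Definition Aco : R := - (s ^ 2 * (q * k - 1) + k * m * t).

Lemma Dco_pos : 0 < Dco.
Proof. unfold Dco. nra. Qed.

Lemma root_identity x : Dco * (wlin x ^ 2 - preal x) = k * ((Dco * x + Bco) ^ 2 - d).
Proof. unfold Dco, wlin, preal, Bco, dNIG. ring. Qed.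

Lemma wlin_identity x : Dco * wlin x = Aco + k * m * (Dco * x + Bco).
Proof. unfold Dco, wlin, Aco, Bco. ring. Qed.

Lemma preal_root_iff x : preal x = wlin x ^ 2 <-> (Dco * x + Bco) ^ 2 = d.
Proof.
  pose proof (root_identity x) as Hr. pose proof Dco_pos. split; intros Hx.
  - rewrite Hx in Hr. assert (Hz : k * ((Dco * x + Bco) ^ 2 - d) = 0) by (rewrite <- Hr; ring).
    apply Rmult_integral in Hz. lra.
  - rewrite Hx in Hr. assert (Hz : Dco * (wlin x ^ 2 - preal x) = 0) by (rewrite Hr; ring).
    apply Rmult_integral in Hz. lra.
Qed.

Lemma preal_factor : rhohat k s t < rho k s t /\
  forall x, preal x = - k * s ^ 2 * (x - rho k s t) * (x - rhohat k s t).
Proof.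
  unfold rho, rhohat, preal.
  assert (hp : 0 < t ^ 2 + s ^ 2 / k).
  { assert (0 < s ^ 2 / k) by (apply Rdiv_lt_0_compat; nra). nra. }
  pose proof (sqrt_lt_R0 _ hp) as Hq. pose proof (sqrt_sqrt _ (Rlt_le _ _ hp)) as Hsq.
  assert (0 < s ^ 2) by nra. split.
  - apply Rmult_lt_compat_r; [apply Rinv_0_lt_compat|]; lra.
  - intros x. set (r := sqrt (t ^ 2 + s ^ 2 / k)) in *. field_simplify; try lra.
    replace (r ^ 2) with (r * r) by ring. rewrite Hsq. field. lra.
Qed.

Lemma preal_nonneg_interval x : 0 <= preal x -> rhohat k s t <= x <= rho k s t.
Proof.
  intros H. destruct preal_factor as [Hl Hf]. rewrite Hf in H.
  assert (0 < k * s ^ 2) by (apply Rmult_lt_0_compat; nra).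
  assert (Hc : (x - rho k s t) * (x - rhohat k s t) <= 0).
  { destruct (Rle_dec ((x - rho k s t) * (x - rhohat k s t)) 0) as [Hle|Hgt]; [exact Hle|].
    assert (0 < k * s ^ 2 * ((x - rho k s t) * (x - rhohat k s t)))
      by (apply Rmult_lt_0_compat; lra).
    lra. }
  split; nra.
Qed.

Lemma preal_pos_interior x : rhohat k s t < x < rho k s t -> 0 < preal x.
Proof.
  intros H. destruct preal_factor as [Hl Hf]. rewrite Hf.
  assert (0 < k * s ^ 2) by (apply Rmult_lt_0_compat; nra).
  assert (0 < (rho k s t - x) * (x - rhohat k s t)) by (apply Rmult_lt_0_compat; lra).
  assert (0 < k * s ^ 2 * ((rho k s t - x) * (x - rhohat k s t)))
    by (apply Rmult_lt_0_compat; lra).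
  lra.
Qed.

Lemma preal_endpoints : preal (rho k s t) = 0 /\ preal (rhohat k s t) = 0.
Proof. destruct preal_factor as [_ Hf]. rewrite !Hf. split; ring. Qed.

Lemma Aco_nonneg_d_pos : 0 <= Aco -> 0 < d.
Proof.
  intros HA. unfold Aco in HA. unfold dNIG.
  set (e := q * k - 1) in *.
  assert (he : 0 < 1 + e) by (unfold e; nra).
  assert (Hq : q = (1 + e) / k) by (unfold e; field; lra).
  assert (Hmt : k * (m * t) <= - s ^ 2 * e) by lra.
  rewrite Hq.
  replace (t ^ 2 + m ^ 2 - 2 * t * m * e + (1 + e) / k * s ^ 2 * (2 - (1 + e) / k * k))
    with ((t + m) ^ 2 - 2 * t * m * (1 + e) + (1 + e) * s ^ 2 * (1 - e) / k) by (field; lra).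
  apply (Rmult_lt_reg_l k); [exact hk|].
  replace (k * ((t + m) ^ 2 - 2 * t * m * (1 + e) + (1 + e) * s ^ 2 * (1 - e) / k))
    with (k * (t + m) ^ 2 - 2 * (1 + e) * (k * (m * t)) + (1 + e) * s ^ 2 * (1 - e))
    by (field; lra).
  assert (0 <= k * (t + m) ^ 2) by (apply Rmult_le_pos; [lra|apply pow2_ge_0]).
  assert (2 * (1 + e) * (k * (m * t)) <= 2 * (1 + e) * (- s ^ 2 * e))
    by (apply Rmult_le_compat_l; lra).
  assert (0 < (1 + e) * (1 + e) * s ^ 2) by (apply Rmult_lt_0_compat; nra).
  nra.
Qed.

Lemma vertex_d_pos x : Dco * x + Bco = 0 -> 0 <= wlin x -> 0 < d.
Proof.
  intros Hx Hw. apply Aco_nonneg_d_pos.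
  pose proof (wlin_identity x) as Hi. rewrite Hx, Rmult_0_r, Rplus_0_r in Hi.
  rewrite <- Hi. apply Rmult_le_pos; [exact (Rlt_le _ _ Dco_pos)|exact Hw].
Qed.

Lemma pNIG_real x : pNIG k s t (mkC x 0) = RtoC (preal x).
Proof. unfold pNIG, preal, Csub, Cadd, Copp, Cscale, Cmul, RtoC. apply Cx_ext; simpl; ring. Qed.

Lemma sol_csqrt_parts z : is_sol q k s m t z ->
  Re (csqrt (pNIG k s t z)) = wlin (Re z) /\ Im (csqrt (pNIG k s t z)) = k * m * Im z.
Proof.
  intros Hs. unfold is_sol, psiX in Hs. set (u := csqrt (pNIG k s t z)) in *.
  assert (HRe := f_equal Re Hs). assert (HIm := f_equal Im Hs).
  unfold Csub, Cadd, Copp, Cscale, RtoC in HRe, HIm; cbn [Re Im] in HRe, HIm.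
  unfold wlin. split.
  - assert (h1 : 1 / k * Re u = 1 / k + m * Re z - q) by lra.
    replace (Re u) with (k * (1 / k * Re u)) by (field; lra). rewrite h1. field. lra.
  - assert (h1 : 1 / k * Im u = m * Im z) by lra.
    replace (Im u) with (k * (1 / k * Im u)) by (field; lra). rewrite h1. ring.
Qed.

Lemma sol_equations z : is_sol q k s m t z ->
  0 <= wlin (Re z) /\
  (Dco * Re z + Bco) ^ 2 - (Dco * Im z) ^ 2 = d /\ (Dco * Re z + Bco) * (Dco * Im z) = 0.
Proof.
  intros Hs. destruct (sol_csqrt_parts z Hs) as [Hu1 Hu2].
  pose proof (csqrt_sq (pNIG k s t z)) as Hsq. pose proof (csqrt_Re_ge0 (pNIG k s t z)) as Hge.
  set (u := csqrt (pNIG k s t z)) in *.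
  assert (E1 := f_equal Re Hsq). assert (E2 := f_equal Im Hsq).
  unfold pNIG, Cmul, Csub, Cadd, Copp, Cscale, RtoC in E1, E2; cbn [Re Im] in E1, E2.
  rewrite Hu1, Hu2 in E1, E2. rewrite Hu1 in Hge. split; [exact Hge|].
  pose proof Dco_pos as HD. unfold wlin in E1, E2.
  set (x := Re z) in *. set (y := Im z) in *.
  assert (I1 : k * ((Dco * x + Bco) ^ 2 - (Dco * y) ^ 2 - d) = 0).
  { transitivity (Dco * ((wlin x * wlin x - k * m * y * (k * m * y))
                          - (1 - 2 * k * t * x - k * s ^ 2 * (x * x - y * y)))).
    { unfold Dco, Bco, wlin, dNIG. ring. }
    unfold wlin. rewrite E1. ring. }
  assert (I2 : k * ((Dco * x + Bco) * (Dco * y)) = 0).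
  { transitivity (Dco * ((wlin x * (k * m * y) + k * m * y * wlin x)
                          - (0 - 2 * k * t * y - k * s ^ 2 * (x * y + y * x))) / 2).
    { unfold Dco, Bco, wlin. field. }
    unfold wlin. rewrite E2. field. }
  apply Rmult_integral in I1. apply Rmult_integral in I2. split; [destruct I1|destruct I2]; lra.
Qed.

Lemma sol_real z : is_sol q k s m t z ->
  Im z = 0 /\ 0 < d /\ (Dco * Re z + Bco) ^ 2 = d /\ 0 <= wlin (Re z).
Proof.
  intros Hs. destruct (sol_equations z Hs) as (Hw & J1 & J2). pose proof Dco_pos as HD.
  (* the vertex D x + B = 0 would force d > 0 and d = - (D y)^2 <= 0 at once *)
  assert (HX : Dco * Re z + Bco <> 0).
  { intros HX. pose proof (vertex_d_pos (Re z) HX Hw).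
    rewrite HX in J1. pose proof (pow2_ge_0 (Dco * Im z)). nra. }
  assert (Hy : Im z = 0).
  { apply Rmult_integral in J2. destruct J2 as [J2|J2]; [contradiction|].
    apply Rmult_integral in J2. destruct J2; lra. }
  rewrite Hy, Rmult_0_r in J1. replace (0 ^ 2) with 0 in J1 by ring.
  assert (0 < (Dco * Re z + Bco) ^ 2) by (rewrite <- Rsqr_pow2; apply Rsqr_pos_lt; exact HX).
  repeat split; try assumption; lra.
Qed.

Lemma sol_of_real_root x : (Dco * x + Bco) ^ 2 = d -> 0 <= wlin x -> is_sol q k s m t (mkC x 0).
Proof.
  intros H Hw. apply preal_root_iff in H.
  unfold is_sol, psiX. rewrite pNIG_real, H, csqrt_nonneg, sqrt_pow2 by (auto using pow2_ge_0).
  unfold wlin. apply Cx_ext; unfold Cadd, Csub, Copp, Cscale, RtoC; simpl; field; lra.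
Qed.

Lemma zeta_real : 0 <= d ->
  Im (zeta q k s m t) = 0 /\ Dco * Re (zeta q k s m t) + Bco = sqrt d.
Proof.
  intros H. pose proof Dco_pos. unfold zeta. rewrite csqrt_nonneg by exact H.
  unfold Cscale, Cadd, RtoC; cbn [Re Im]. fold Dco. split; [ring|]. unfold Bco. field. lra.
Qed.

Lemma zetahat_real : 0 <= d ->
  Im (zetahat q k s m t) = 0 /\ Dco * Re (zetahat q k s m t) + Bco = - sqrt d.
Proof.
  intros H. pose proof Dco_pos. unfold zetahat. rewrite csqrt_nonneg by exact H.
  unfold Cscale, Csub, Cadd, Copp, RtoC; cbn [Re Im]. fold Dco.
  split; [ring|]. unfold Bco. field. lra.
Qed.

Lemma zeta_Im0_d : Im (zeta q k s m t) = 0 -> 0 <= d.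
Proof.
  intros H. apply csqrt_real_Im0. pose proof Dco_pos.
  change (1 / Dco * (0 + Im (csqrt (RtoC d))) = 0) in H.
  apply Rmult_integral in H. destruct H as [H|H]; [|lra].
  exfalso. assert (0 < 1 / Dco) by (apply Rdiv_lt_0_compat; lra). lra.
Qed.

Lemma zetahat_Im0_d : Im (zetahat q k s m t) = 0 -> 0 <= d.
Proof.
  intros H. apply csqrt_real_Im0. pose proof Dco_pos.
  change (1 / Dco * (0 + - Im (csqrt (RtoC d))) = 0) in H.
  apply Rmult_integral in H. destruct H as [H|H]; [|lra].
  exfalso. assert (0 < 1 / Dco) by (apply Rdiv_lt_0_compat; lra). lra.
Qed.

Lemma real_root_is_zeta x : (Dco * x + Bco) ^ 2 = d ->
  mkC x 0 = zeta q k s m t \/ mkC x 0 = zetahat q k s m t.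
Proof.
  intros H. assert (Hd : 0 <= d) by (rewrite <- H; apply pow2_ge_0).
  destruct (zeta_real Hd) as [HI1 HR1]. destruct (zetahat_real Hd) as [HI2 HR2].
  pose proof Dco_pos. pose proof (sqrt_sqrt d Hd).
  assert (Hf : (Dco * x + Bco - sqrt d) * (Dco * x + Bco + sqrt d) = 0)
    by (transitivity ((Dco * x + Bco) ^ 2 - sqrt d * sqrt d); [ring|lra]).
  apply Rmult_integral in Hf. destruct Hf as [Hf|Hf]; [left|right];
    apply Cx_ext; cbn [Re Im]; try congruence; apply (Rmult_eq_reg_l Dco); lra.
Qed.

(* Real roots lie in [rhohat, rho], since there p = w^2 >= 0. *)
Lemma real_root_interval x : (Dco * x + Bco) ^ 2 = d -> rhohat k s t <= x <= rho k s t.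
Proof.
  intros H. apply preal_nonneg_interval. apply preal_root_iff in H. rewrite H. apply pow2_ge_0.
Qed.

Lemma wlin_nonneg_iff x : 0 <= wlin x <-> q - 1 / k <= m * x.
Proof.
  unfold wlin. replace (1 - q * k + k * m * x) with (k * (m * x - (q - 1 / k))) by (field; lra).
  split; intros H.
  - apply Rmult_le_reg_l with k; [exact hk|]. lra.
  - apply Rmult_le_pos; lra.
Qed.

(* z = 0 is never a solution: psi_X(0) = 0 < q *)
Lemma real_root_nonzero x : (Dco * x + Bco) ^ 2 = d -> 0 <= wlin x -> x <> 0.
Proof.
  intros H Hw Hx. apply preal_root_iff in H. subst x.
  unfold preal, wlin in H, Hw. assert (0 < q * k) by nra. nra.
Qed.

Lemma sol_iff z : is_sol q k s m t z <->
  (Im z = 0 /\ ((rhohat k s t <= Re z /\ Re z < 0) \/ (0 < Re z /\ Re z <= rho k s t))) /\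
  (z = zeta q k s m t \/ z = zetahat q k s m t) /\ 0 < d /\ q - 1 / k <= m * Re z.
Proof.
  assert (Hz : forall z, Im z = 0 -> z = mkC (Re z) 0) by (intros z' H; apply Cx_ext; auto).
  split.
  - intros Hs. destruct (sol_real z Hs) as (Hy & Hd & Hr & Hw).
    pose proof (real_root_interval _ Hr). pose proof (real_root_nonzero _ Hr Hw).
    split; [split; [exact Hy|]|].
    { destruct (Rlt_le_dec (Re z) 0); [left|right]; lra. }
    rewrite (Hz z Hy). split; [exact (real_root_is_zeta _ Hr)|].
    split; [exact Hd|]. apply wlin_nonneg_iff. exact Hw.
  - intros ((Hy & _) & Hze & Hd & Hq). rewrite (Hz z Hy).
    apply sol_of_real_root; [|apply wlin_nonneg_iff; exact Hq].
    destruct Hze as [-> | ->].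
    + rewrite (proj2 (zeta_real (Rlt_le _ _ Hd))). apply pow2_sqrt. lra.
    + rewrite (proj2 (zetahat_real (Rlt_le _ _ Hd))).
      replace ((- sqrt d) ^ 2) with (sqrt d ^ 2) by ring. apply pow2_sqrt. lra.
Qed.

Lemma sol_is_zeta z : is_sol q k s m t z -> z = zeta q k s m t \/ z = zetahat q k s m t.
Proof. intros Hs. apply sol_iff in Hs. tauto. Qed.

Lemma sol_d_pos z : is_sol q k s m t z -> 0 < d.
Proof. intros Hs. apply sol_iff in Hs. tauto. Qed.

Lemma zetas_distinct : 0 < d -> zeta q k s m t <> zetahat q k s m t.
Proof.
  intros Hd Heq. pose proof (sqrt_lt_R0 _ Hd).
  destruct (zeta_real (Rlt_le _ _ Hd)) as [_ H1].
  destruct (zetahat_real (Rlt_le _ _ Hd)) as [_ H2]. rewrite Heq in H1. lra.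
Qed.

Lemma zeta_sol_pos : is_sol q k s m t (zeta q k s m t) ->
  Im (zeta q k s m t) = 0 /\ 0 < Re (zeta q k s m t).
Proof.
  intros Hs. destruct (sol_real _ Hs) as (Hy & Hd & _ & Hw). split; [exact Hy|].
  destruct (zeta_real (Rlt_le _ _ Hd)) as [_ HX]. pose proof Dco_pos.
  pose proof (wlin_identity (Re (zeta q k s m t))) as Hi. rewrite HX in Hi.
  assert (HA : 0 <= Aco + k * m * sqrt d) by (rewrite <- Hi; apply Rmult_le_pos; lra).
  assert (HB : Bco < sqrt d).
  { apply (key_sign q k s m t); auto using sqrt_pos. apply pow2_sqrt. lra. }
  apply (Rmult_lt_reg_l Dco); lra.
Qed.

Lemma zetahat_sol_neg : is_sol q k s m t (zetahat q k s m t) ->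
  Im (zetahat q k s m t) = 0 /\ Re (zetahat q k s m t) < 0.
Proof.
  intros Hs. destruct (sol_real _ Hs) as (Hy & Hd & _ & Hw). split; [exact Hy|].
  destruct (zetahat_real (Rlt_le _ _ Hd)) as [_ HX]. pose proof Dco_pos.
  pose proof (wlin_identity (Re (zetahat q k s m t))) as Hi. rewrite HX in Hi.
  assert (HA : 0 <= Aco + k * m * - sqrt d) by (rewrite <- Hi; apply Rmult_le_pos; lra).
  (* the reflection (mu, theta) -> (- mu, - theta) fixes d and A and negates B *)
  assert (HB : - Bco < sqrt d).
  { assert (Hsym : sqrt d ^ 2 = dNIG q k s (- m) (- t))
      by (rewrite pow2_sqrt by lra; unfold dNIG; ring).
    pose proof (key_sign q k s (- m) (- t) (sqrt d) hq hk hs (sqrt_pos _) Hsym) as Hk.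
    unfold Aco, Bco in *. lra. }
  apply (Rmult_lt_reg_l Dco); lra.
Qed.

Lemma zeta_interval : Im (zeta q k s m t) = 0 ->
  rhohat k s t <= Re (zeta q k s m t) <= rho k s t.
Proof.
  intros H. apply real_root_interval. pose proof (zeta_Im0_d H) as Hd.
  rewrite (proj2 (zeta_real Hd)). apply pow2_sqrt. exact Hd.
Qed.

Lemma zetahat_interval : Im (zetahat q k s m t) = 0 ->
  rhohat k s t <= Re (zetahat q k s m t) <= rho k s t.
Proof.
  intros H. apply real_root_interval. pose proof (zetahat_Im0_d H) as Hd.
  rewrite (proj2 (zetahat_real Hd)). replace ((- sqrt d) ^ 2) with (sqrt d ^ 2) by ring.
  apply pow2_sqrt. exact Hd.
Qed.

(* When d = 0 the vertex -B/D is a double root of p - w^2; it cannot be a zero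
   of p when p has a second, distinct zero. *)
Lemma vertex_not_endpoint x1 x2 : d = 0 -> Dco * x1 + Bco = 0 ->
  preal x1 = 0 -> preal x2 = 0 -> x1 <> x2 -> False.
Proof.
  intros Hd Hx1 Hp1 Hp2 Hne. pose proof Dco_pos.
  pose proof (root_identity x1) as R1. pose proof (root_identity x2) as R2.
  rewrite Hd, Hp1, Hx1 in R1. rewrite Hd, Hp2 in R2.
  assert (Hw1 : wlin x1 = 0).
  { replace (k * (0 ^ 2 - 0)) with 0 in R1 by ring.
    replace (wlin x1 ^ 2 - 0) with (wlin x1 * wlin x1) in R1 by ring.
    apply Rmult_integral in R1. destruct R1 as [R1|R1]; [lra|].
    apply Rmult_integral in R1. tauto. }
  assert (Ew : wlin x2 = k * m * (x2 - x1)) by (unfold wlin in *; lra).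
  assert (Ex : Dco * x2 + Bco = Dco * (x2 - x1)) by lra.
  rewrite Ew, Ex in R2.
  assert (hx : 0 < (x2 - x1) ^ 2) by (rewrite <- Rsqr_pow2; apply Rsqr_pos_lt; lra).
  (* R2 reads k D (x2 - x1)^2 (k m^2 - D) = 0, but k m^2 - D = - s^2 < 0 *)
  assert (Hs2 : k * Dco * (x2 - x1) ^ 2 * s ^ 2 = 0).
  { transitivity (k * ((Dco * (x2 - x1)) ^ 2 - 0) - Dco * ((k * m * (x2 - x1)) ^ 2 - 0)).
    - unfold Dco. ring.
    - rewrite <- R2. ring. }
  assert (0 < k * Dco * (x2 - x1) ^ 2 * s ^ 2).
  { assert (0 < s ^ 2) by nra.
    apply Rmult_lt_0_compat; [apply Rmult_lt_0_compat; [apply Rmult_lt_0_compat|]|]; lra. }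
  lra.
Qed.

(* Part (vi): rho = zetahat would put rho at the vertex with d = 0. *)
Lemma rho_ne_zetahat : RtoC (rho k s t) <> zetahat q k s m t.
Proof.
  intros Heq. pose proof Dco_pos.
  assert (HIm : Im (zetahat q k s m t) = 0) by (rewrite <- Heq; reflexivity).
  assert (HRe : Re (zetahat q k s m t) = rho k s t) by (rewrite <- Heq; reflexivity).
  pose proof (zetahat_Im0_d HIm) as Hd.
  destruct (zeta_real Hd) as [HI1 HX1]. destruct (zetahat_real Hd) as [_ HX2].
  pose proof (zeta_interval HI1). pose proof (sqrt_pos d).
  (* D (zeta - rho) = 2 sqrt d >= 0 while zeta <= rho: so d = 0 and rho is the vertex *)
  assert (Hs0 : sqrt d = 0) by nra.
  assert (Hd0 : d = 0) by (rewrite <- (pow2_sqrt d Hd), Hs0; ring).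
  destruct preal_endpoints as [Hp1 Hp2]. destruct preal_factor as [Hlt _].
  rewrite HRe in HX2.
  apply (vertex_not_endpoint (rho k s t) (rhohat k s t)); auto; lra.
Qed.

Lemma rhohat_ne_zeta : RtoC (rhohat k s t) <> zeta q k s m t.
Proof.
  intros Heq. pose proof Dco_pos.
  assert (HIm : Im (zeta q k s m t) = 0) by (rewrite <- Heq; reflexivity).
  assert (HRe : Re (zeta q k s m t) = rhohat k s t) by (rewrite <- Heq; reflexivity).
  pose proof (zeta_Im0_d HIm) as Hd.
  destruct (zeta_real Hd) as [_ HX1]. destruct (zetahat_real Hd) as [HI2 HX2].
  pose proof (zetahat_interval HI2). pose proof (sqrt_pos d).
  assert (Hs0 : sqrt d = 0) by nra.
  assert (Hd0 : d = 0) by (rewrite <- (pow2_sqrt d Hd), Hs0; ring).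
  destruct preal_endpoints as [Hp1 Hp2]. destruct preal_factor as [Hlt _].
  rewrite HRe in HX1.
  apply (vertex_not_endpoint (rhohat k s t) (rho k s t)); auto; lra.
Qed.

Lemma endpoints_iff :
  (RtoC (rho k s t) = zeta q k s m t /\ RtoC (rhohat k s t) = zetahat q k s m t) <->
  (m = 0 /\ q = 1 / k).
Proof.
  split.
  - intros [E1 E2].
    assert (HIm : Im (zeta q k s m t) = 0) by (rewrite <- E1; reflexivity).
    assert (HR1 : Re (zeta q k s m t) = rho k s t) by (rewrite <- E1; reflexivity).
    assert (HR2 : Re (zetahat q k s m t) = rhohat k s t) by (rewrite <- E2; reflexivity).
    pose proof (zeta_Im0_d HIm) as Hd.
    destruct (zeta_real Hd) as [_ HX1]. destruct (zetahat_real Hd) as [_ HX2].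
    rewrite HR1 in HX1. rewrite HR2 in HX2.
    destruct preal_endpoints as [Hp1 Hp2]. destruct preal_factor as [Hlt _].
    (* p - w^2 vanishes at both endpoints, where p = 0, so w vanishes at both *)
    assert (Hw : forall x, preal x = 0 -> (Dco * x + Bco) ^ 2 = d -> wlin x = 0).
    { intros x Hp Hr. apply preal_root_iff in Hr. rewrite Hp in Hr. nra. }
    assert (Hw1 : wlin (rho k s t) = 0)
      by (apply Hw; [exact Hp1|rewrite HX1; apply pow2_sqrt; exact Hd]).
    assert (Hw2 : wlin (rhohat k s t) = 0).
    { apply Hw; [exact Hp2|]. rewrite HX2. replace ((- sqrt d) ^ 2) with (sqrt d ^ 2) by ring.
      apply pow2_sqrt; exact Hd. }
    unfold wlin in Hw1, Hw2.
    assert (Hm : k * m * (rho k s t - rhohat k s t) = 0) by lra.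
    apply Rmult_integral in Hm. destruct Hm as [Hm|Hm]; [|lra].
    apply Rmult_integral in Hm. destruct Hm as [Hm|Hm]; [lra|].
    rewrite Hm in Hw1. split; [exact Hm|]. field_simplify; [|lra].
    apply (Rmult_eq_reg_l k); [|lra]. field_simplify; lra.
  - intros [Hm Hq]. rewrite Hm.
    assert (Hd : dNIG q k s 0 t = t ^ 2 + s ^ 2 / k) by (unfold dNIG; rewrite Hq; field; lra).
    assert (Hdp : 0 <= t ^ 2 + s ^ 2 / k).
    { assert (0 <= s ^ 2 / k) by (apply Rmult_le_pos; [nra|left; apply Rinv_0_lt_compat; lra]).
      nra. }
    unfold zeta, zetahat, rho, rhohat. rewrite Hd, csqrt_nonneg by exact Hdp. rewrite Hq.
    assert (0 < s ^ 2) by nra.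
    split; apply Cx_ext; unfold Cscale, Csub, Cadd, Copp, RtoC; cbn [Re Im]; field; lra.
Qed.

Definition dpNIG (z : Cx) : Cx := Cadd (RtoC (- 2 * k * t)) (Cscale (- 2 * k * s ^ 2) z).

Lemma pNIG_quad_bound z : quad_bound (pNIG k s t) z (dpNIG z) (k * s ^ 2).
Proof.
  intros h.
  replace (Csub (Csub (pNIG k s t (Cadd z h)) (pNIG k s t z)) (Cmul (dpNIG z) h))
    with (Cscale (- (k * s ^ 2)) (Cmul h h))
    by (unfold pNIG, dpNIG, Csub, Cadd, Copp, Cscale, Cmul, RtoC; apply Cx_ext; simpl; ring).
  rewrite Cnorm_scale, Cnorm_mul, Rabs_Ropp, Rabs_right by (apply Rle_ge; nra). lra.
Qed.

Definition Faff (z : Cx) : Cx :=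
  Cadd (RtoC (q - 1 / k)) (Cadd (Cscale (1 / k) (csqrt (pNIG k s t z))) (Cscale (- m) z)).

Lemma F_affine z : Faff z = Csub (RtoC q) (psiX k s m t z).
Proof. unfold Faff, psiX, Csub, Cadd, Copp, Cscale, RtoC. apply Cx_ext; cbn [Re Im]; ring. Qed.

Lemma simple_zero_interior z0 : is_sol q k s m t z0 ->
  rhohat k s t < Re z0 < rho k s t ->
  simple_zero (fun z => Csub (RtoC q) (psiX k s m t z)) z0.
Proof.
  intros Hs Hint. destruct (sol_real z0 Hs) as (Hy & Hd & Hr & Hw).
  set (x0 := Re z0) in *.
  assert (Hz0 : z0 = mkC x0 0) by (apply Cx_ext; auto).
  pose proof (preal_pos_interior x0 Hint) as Hp.
  assert (Hpw : preal x0 = wlin x0 ^ 2) by (apply preal_root_iff; exact Hr).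
  assert (Hw0 : 0 < wlin x0) by (rewrite Hpw in Hp; nra).
  assert (Hu0 : csqrt (pNIG k s t z0) = RtoC (wlin x0)).
  { rewrite Hz0, pNIG_real, Hpw, csqrt_nonneg, sqrt_pow2 by (auto using pow2_ge_0; lra).
    reflexivity. }
  assert (Hre : 0 < Re (csqrt (pNIG k s t z0))) by (rewrite Hu0; exact Hw0).
  apply (simple_zero_ext Faff (fun z => Csub (RtoC q) (psiX k s m t z)) z0 F_affine).
  split; [|split].
  - rewrite F_affine. rewrite Hs. apply Cx_ext; cbn; ring.
  - unfold Faff. apply analytic_affine, csqrt_comp_analytic.
    + intros z. exists (dpNIG z), (k * s ^ 2). split; [nra|apply pNIG_quad_bound].
    + rewrite Hz0, pNIG_real. cbn. exact Hp.
  - eexists. split.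
    { unfold Faff. apply has_deriv_affine.
      apply (csqrt_comp_deriv (pNIG k s t) z0 (dpNIG z0) (k * s ^ 2));
        [nra|apply pNIG_quad_bound|exact Hre]. }
    (* Re of the derivative is (- theta - sigma^2 x0) / w(x0) - mu; its vanishing
       would put x0 at the vertex D x0 + B = 0, forcing d = 0 *)
    rewrite Hu0, Hz0. intros Hl. apply (f_equal Re) in Hl.
    unfold dpNIG, Csub, Cadd, Copp, Cscale, Cmul, Cinv, RtoC in Hl. cbn [Re Im] in Hl.
    set (w := wlin x0) in *.
    assert (Hl2 : (- t - s ^ 2 * x0) / w - m = 0) by (rewrite <- Hl; field; lra).
    assert (HX : Dco * x0 + Bco = 0).
    { assert (- t - s ^ 2 * x0 = m * w).
      { replace (- t - s ^ 2 * x0) with ((- t - s ^ 2 * x0) / w * w) by (field; lra).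
        replace ((- t - s ^ 2 * x0) / w) with m by lra. reflexivity. }
      unfold w, wlin, Dco, Bco in *. lra. }
    rewrite HX in Hr. lra.
Qed.
End NIGRoots.

Theorem proposition2p1 (q kappa sigma mu theta : R)
  (hq : 0 < q) (hk : 0 < kappa) (hs : 0 < sigma) :
  let sol := is_sol q kappa sigma mu theta in
  let rh := rho kappa sigma theta in
  let rhh := rhohat kappa sigma theta in
  let d := dNIG q kappa sigma mu theta in
  let ze := zeta q kappa sigma mu theta in
  let zeh := zetahat q kappa sigma mu theta in
  (* (i) at most two solutions, i.e. none, exactly one or exactly two *)
  (forall z1 z2 z3 : Cx, sol z1 -> sol z2 -> sol z3 ->
      z1 = z2 \/ z1 = z3 \/ z2 = z3) /\
  (* (ii) characterisation of the solutions *)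
  (forall z0 : Cx, sol z0 <->
      (Im z0 = 0 /\ ((rhh <= Re z0 /\ Re z0 < 0) \/ (0 < Re z0 /\ Re z0 <= rh))) /\
      (z0 = ze \/ z0 = zeh) /\ 0 < d /\ q - 1 / kappa <= mu * Re z0) /\
  ((sol ze \/ sol zeh) -> ze <> zeh) /\
  (* (iii) *)
  (sol ze -> Im ze = 0 /\ 0 < Re ze) /\
  (sol zeh -> Im zeh = 0 /\ Re zeh < 0) /\
  (sol ze -> sol zeh -> rhh <= Re zeh /\ Re zeh < 0 /\ 0 < Re ze /\ Re ze <= rh) /\
  (* (iv) simple zero of q - psi_X *)
  (forall z0 : Cx, sol z0 -> Im z0 = 0 -> rhh < Re z0 -> Re z0 < rh ->
      simple_zero (fun z => Csub (RtoC q) (psiX kappa sigma mu theta z)) z0) /\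
  (* (v) *)
  (Im ze = 0 -> rhh <= Re ze /\ Re ze <= rh) /\
  (Im zeh = 0 -> rhh <= Re zeh /\ Re zeh <= rh) /\
  (* (vi) *)
  RtoC rh <> zeh /\ RtoC rhh <> ze /\
  (* (vii) *)
  ((RtoC rh = ze /\ RtoC rhh = zeh) <-> (mu = 0 /\ q = 1 / kappa)).
Proof.
  intros sol rh rhh d ze zeh. subst sol rh rhh d ze zeh.
  pose proof (zeta_interval q kappa sigma mu theta hk hs) as Hv1.
  pose proof (zetahat_interval q kappa sigma mu theta hk hs) as Hv2.
  pose proof (zeta_sol_pos q kappa sigma mu theta hq hk hs) as Hpos.
  pose proof (zetahat_sol_neg q kappa sigma mu theta hq hk hs) as Hneg.
  split.
  { intros z1 z2 z3 H1 H2 H3.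
    destruct (sol_is_zeta _ _ _ _ _ hq hk hs _ H1) as [->| ->],
             (sol_is_zeta _ _ _ _ _ hq hk hs _ H2) as [->| ->],
             (sol_is_zeta _ _ _ _ _ hq hk hs _ H3) as [->| ->]; auto. }
  split; [exact (sol_iff q kappa sigma mu theta hq hk hs)|].
  split.
  { intros [H|H]; apply (zetas_distinct q kappa sigma mu theta hk hs);
      exact (sol_d_pos _ _ _ _ _ hq hk hs _ H). }
  split; [exact Hpos|]. split; [exact Hneg|].
  split.
  { intros H1 H2. destruct (Hpos H1) as [Hy1 Hx1]. destruct (Hneg H2) as [Hy2 Hx2].
    pose proof (Hv1 Hy1). pose proof (Hv2 Hy2). lra. }
  split; [intros z0 H _ H1 H2; apply simple_zero_interior; auto|].
  split; [exact Hv1|]. split; [exact Hv2|].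
  split; [exact (rho_ne_zetahat q kappa sigma mu theta hk hs)|].
  split; [exact (rhohat_ne_zeta q kappa sigma mu theta hk hs)|].
  exact (endpoints_iff q kappa sigma mu theta hk hs).
Qed.
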